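(* Let $M$ be a von Neumann algebra acting on a separable Hilbert space $\mathcal H$, $\Omega\in\mathcal H$ a separating vector for $M$, and $T,S\in\mathcal B(\mathcal H)$ injective operators such that the maps $x\mapsto Tx\Omega$ and $x\mapsto Sx\Omega$ from $M$ to $\mathcal H$ are compact. Let $L_1(x):=\|Tx\Omega\|$ and $L_2(x):=\|Sx\Omega\|$ (dual-Lip-norms on $M$). Then $J(x,y):=\|Tx\Omega+Sy\Omega\|$, $(x,y)\in M\oplus M$, belongs to $\mathcal L((M,L_1),(M,L_2))$, and $$\mathrm{dist}_{qGH^*}((M,L_1),(M,L_2))\le\sup_{x\in M,\ \|x\|=1}\|(T-S)x\Omega\|.$$
   Context: A dual-Lip-norm on a von Neumann algebra $M$ is a norm on $M$ (everywhere finite) inducing the $w^*$-topology on bounded subsets of $M$; a Lip-von Neumann algebra (LvNA) is a pair $(M,L_M)$ with $L_M$ such a norm. A linear map is compact if it maps the unit ball to a relatively norm-compact set. $L_M$ is extended to $\mathcal M_2(M)$ ($2\times2$ matrices over $M$) by $L_M((a_{ij}))=\max_{i,j}L_M(a_{ij})$. For LvNAs $(M,L_M)$, $(N,L_N)$, $\mathcal L((M,L_M),(N,L_N))$ is the set of seminorms $L$ on $M\oplus N$ with $L(x,0)=L_M(x)$ and $L(0,y)=L_N(y)$ for all $x\in M,y\in N$; each such $L$ is extended to $\mathcal M_2(M)\oplus\mathcal M_2(N)\cong\mathcal M_2(M\oplus N)$ by entrywise maximum. $X_M=\{x\in\mathcal M_2(M): x\ge 0,\ \|x\|\le 1\}$,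 and similarly $X_N$. For such $L$, $\mathrm{dist}^L_H(X_M,X_N)=\max\big(\sup_{x\in X_M}\inf_{y\in X_N}L(x,-y),\ \sup_{y\in X_N}\inf_{x\in X_M}L(x,-y)\big)$, and $\mathrm{dist}_{qGH^*}((M,L_M),(N,L_N))=\inf_{L}\mathrm{dist}^L_H(X_M,X_N)$, the infimum over $L\in\mathcal L((M,L_M),(N,L_N))$. *)

From HB Require Import structures.
From mathcomp Require Import all_boot all_order all_algebra.
From mathcomp Require Import complex.
From mathcomp Require Import boolp classical_sets reals constructive_ereal.
From mathcomp Require Import ereal.

Set Implicit Arguments.
Unset Strict Implicit.
Unset Printing Implicit Defensive.

Import Order.TTheory GRing.Theory Num.Theory.
Local Open Scope ring_scope.
Local Open Scope classical_set_scope.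
Local Open Scope complex_scope.

Section Hilbert.
Variable R : realType.
Notation C := (R[i]).
Variable V : lmodType C.
Variable ip : V -> V -> C.   (* inner product, linear in the first variable *)

Definition is_inner_product : Prop :=
  [/\ (forall a u w v, ip (a *: u + w) v = a * ip u v + ip w v),
      (forall u v, ip u v = (ip v u)^*),
      (forall v, 0 <= ip v v) &
      (forall v, ip v v = 0 -> v = 0)].

Definition hnorm (v : V) : R := Num.sqrt (complex.Re (ip v v)).

Definition hcomplete : Prop :=
  forall u : nat -> V,
    (forall e : R, 0 < e -> exists N, forall m n, (N <= m)%N -> (N <= n)%N ->
        hnorm (u m - u n) < e) ->
    exists l, forall e : R, 0 < e -> exists N, forall n, (N <= n)%N ->
        hnorm (u n - l) < e.

Definition hseparable : Prop :=
  exists d : nat -> V, forall v (e : R), 0 < e -> exists n, hnorm (v - d n) < e.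

Definition bounded_op (A : V -> V) : Prop :=
  (forall (a : C) u w, A (a *: u + w) = a *: A u + A w) /\
  exists c : R, forall v, hnorm (A v) <= c * hnorm v.

Definition opnorm (A : V -> V) : R :=
  inf [set c : R | 0 <= c /\ forall v, hnorm (A v) <= c * hnorm v].

Definition is_adjoint (A B : V -> V) : Prop :=
  forall u v, ip (A u) v = ip u (B v).

Definition commutant (S : set (V -> V)) : set (V -> V) :=
  [set y | bounded_op y /\ forall x, S x -> y \o x = x \o y].

Definition vN_algebra (M : set (V -> V)) : Prop :=
  [/\ (forall x, M x -> bounded_op x),
      M id,
      (forall x y, M x -> M y -> M (fun v => x v + y v)),
      (forall (a : C) x, M x -> M (fun v => a *: x v)) &
      (forall x y, M x -> M y -> M (x \o y))] /\
  (forall x, M x -> exists2 y, M y & is_adjoint x y) /\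
  M = commutant (commutant M).

Definition separating (M : set (V -> V)) (Om : V) : Prop :=
  forall x, M x -> x Om = 0 -> x = (fun _ => 0).

(* f : M -> H is compact: the image of the unit ball of M is relatively
   norm-compact in H (sequential formulation, H being complete metric) *)
Definition compact_map (M : set (V -> V)) (f : (V -> V) -> V) : Prop :=
  forall u : nat -> (V -> V), (forall n, M (u n) /\ opnorm (u n) <= 1) ->
    exists phi : nat -> nat, (forall n, (phi n < phi n.+1)%N) /\
      exists l : V, forall e : R, 0 < e -> exists N, forall n, (N <= n)%N ->
        hnorm (f (u (phi n)) - l) < e.

(* 2x2 matrices over operators, acting on H (+) H *)
Definition mat2 := 'I_2 -> 'I_2 -> (V -> V).

Definition act2 (a : mat2) (xi : 'I_2 -> V) : 'I_2 -> V :=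
  fun i => \sum_(j < 2) a i j (xi j).

Definition ip2 (xi eta : 'I_2 -> V) : C := \sum_(i < 2) ip (xi i) (eta i).

Definition hnorm2 (xi : 'I_2 -> V) : R := Num.sqrt (complex.Re (ip2 xi xi)).

Definition XM (M : set (V -> V)) : set mat2 :=
  [set a | [/\ (forall i j, M (a i j)),
              (forall xi, 0 <= ip2 (act2 a xi) xi) &
              (forall xi, hnorm2 (act2 a xi) <= hnorm2 xi)]].

Definition zero_op : V -> V := fun _ => 0.

Definition Lset (M : set (V -> V)) (L1 L2 : (V -> V) -> R)
    (L : (V -> V) * (V -> V) -> R) : Prop :=
  [/\ (forall x y x' y', M x -> M y -> M x' -> M y' ->
         L ((fun v => x v + x' v), (fun v => y v + y' v)) <= L (x, y) + L (x', y')),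
      (forall (c : C) x y, M x -> M y ->
         L ((fun v => c *: x v), (fun v => c *: y v)) = complex.Re `|c| * L (x, y)),
      (forall x, M x -> L (x, zero_op) = L1 x) &
      (forall y, M y -> L (zero_op, y) = L2 y)].

Definition Lmat (L : (V -> V) * (V -> V) -> R) (a b : mat2) : R :=
  \big[Num.max/0]_(i < 2) \big[Num.max/0]_(j < 2) L (a i j, b i j).

Definition negm (b : mat2) : mat2 := fun i j v => - b i j v.

Definition distH (M : set (V -> V)) (L : (V -> V) * (V -> V) -> R) : \bar R :=
  Order.max
    (ereal_sup [set ereal_inf [set (Lmat L x (negm y))%:E | y in XM M] | x in XM M])
    (ereal_sup [set ereal_inf [set (Lmat L x (negm y))%:E | x in XM M] | y in XM M]).

Definition dist_qGH (M : set (V -> V)) (L1 L2 : (V -> V) -> R) : \bar R :=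
  ereal_inf [set distH M L | L in Lset M L1 L2].

End Hilbert.

(* Use J itself.  Since J (x, -x) = ||(T - S) x Om||, pairing every x of X_M
   with itself bounds both halves of the Hausdorff distance by the largest
   ||(T - S) x_ij Om|| over the entries x_ij of positive contractions x.
   These entries are contractions lying in M, and rescaling a nonzero
   contraction to operator norm one can only increase ||(T - S) . Om||.
   Completeness, separability, the separating vector, injectivity and
   compactness only serve to make L1 and L2 dual-Lip-norms; the inequality
   does not use them. *)
From HB Require Import structures.
From mathcomp Require Import all_boot all_order all_algebra.
From mathcomp Require Import complex.
From mathcomp Require Import boolp classical_sets reals constructive_ereal.
From mathcomp Require Import ereal.
From mathcomp Require Import ring lra.

Set Implicit Arguments.
Unset Strict Implicit.
Unset Printing Implicit Defensive.

Import Order.TTheory GRing.Theory Num.Theory.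
Local Open Scope ring_scope.
Local Open Scope classical_set_scope.

Section InnerProduct.
Variables (R : realType) (V : lmodType R[i]) (ip : V -> V -> R[i]).
Hypothesis Hip : is_inner_product ip.

Lemma ipC u v : ip u v = (ip v u)^*%C.
Proof. by case: Hip => _ sym _ _. Qed.

Lemma ipDl u w v : ip (u + w) v = ip u v + ip w v.
Proof. by case: Hip => lin _ _ _; have := lin 1 u w v; rewrite scale1r mul1r. Qed.

Lemma ip0l v : ip 0 v = 0.
Proof.
have h := ipDl 0 0 v; rewrite addr0 in h.
by apply: (@addrI _ (ip 0 v)); rewrite -h addr0.
Qed.

Lemma ipZl a u v : ip (a *: u) v = a * ip u v.
Proof. by case: Hip => lin _ _ _; have := lin a u 0 v; rewrite !addr0 ip0l addr0. Qed.

Lemma ipNl u v : ip (- u) v = - ip u v.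
Proof. by rewrite -scaleN1r ipZl mulN1r. Qed.

Lemma ipDr u v w : ip u (v + w) = ip u v + ip u w.
Proof. by rewrite (ipC u) ipDl raddfD /= -(ipC u v) -(ipC u w). Qed.

Lemma ipZr a u v : ip u (a *: v) = a^*%C * ip u v.
Proof. by rewrite (ipC u) ipZl rmorphM /= -(ipC u v). Qed.

Lemma ipNr u v : ip u (- v) = - ip u v.
Proof. by rewrite -scaleN1r ipZr rmorphN1 mulN1r. Qed.

Lemma ip_ge0 v : 0 <= ip v v.
Proof. by case: Hip => _ _ pos _. Qed.

Lemma ip_selfE v : ip v v = (complex.Re (ip v v))%:C%C.
Proof. by have := ger0_Im (ip_ge0 v); case: (ip v v) => a b /= ->. Qed.

Lemma Re_ip_ge0 v : 0 <= complex.Re (ip v v).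
Proof. by have := ip_ge0 v; rewrite lecE => /andP[]. Qed.

Lemma hnorm_ge0 v : 0 <= hnorm ip v.
Proof. exact: sqrtr_ge0. Qed.

Lemma hnorm_sqr v : hnorm ip v ^+ 2 = complex.Re (ip v v).
Proof. by rewrite sqr_sqrtr // Re_ip_ge0. Qed.

Lemma hnorm0 : hnorm ip 0 = 0.
Proof. by rewrite /hnorm ip0l sqrtr0. Qed.

Lemma hnorm_eq0 v : hnorm ip v = 0 -> v = 0.
Proof.
move/eqP; rewrite sqrtr_eq0 => Re_le0.
have Re0 : complex.Re (ip v v) = 0 by apply/le_anti; rewrite Re_le0 Re_ip_ge0.
by case: Hip => _ _ _; apply; rewrite ip_selfE Re0.
Qed.

Lemma hnormZ a v : hnorm ip (a *: v) = complex.Re `|a| * hnorm ip v.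
Proof.
have ReM (p : R) : complex.Re (a * (a^*%C * p%:C%C))
                   = ((complex.Re a) ^+ 2 + (complex.Im a) ^+ 2) * p.
  by case: a => ar ai; simpc; rewrite /=; ring.
rewrite /hnorm ipZl ipZr ip_selfE ReM normc_def /= sqrtrM //.
by rewrite addr_ge0 // sqr_ge0.
Qed.

Lemma hnormZ_real (c : R) v : 0 <= c -> hnorm ip (c%:C%C *: v) = c * hnorm ip v.
Proof.
by move=> c0; rewrite hnormZ normc_def /= expr0n addr0 sqrtr_sqr ger0_norm.
Qed.

Lemma Re_ip_le_hnormM u v : complex.Re (ip u v) <= hnorm ip u * hnorm ip v.
Proof.
have [a0|a0] := eqVneq (hnorm ip u) 0.
  by rewrite (hnorm_eq0 a0) ip0l hnorm0 mul0r.
have [b0|b0] := eqVneq (hnorm ip v) 0.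
  by rewrite (hnorm_eq0 b0) hnorm0 mulr0 ipC ip0l conjc0.
have apos : 0 < hnorm ip u by rewrite lt0r a0 hnorm_ge0.
have bpos : 0 < hnorm ip v by rewrite lt0r b0 hnorm_ge0.
set a := hnorm ip u in apos *; set b := hnorm ip v in bpos *.
(* expand 0 <= || b u - a v ||^2 *)
have := Re_ip_ge0 (b%:C%C *: u - a%:C%C *: v).
rewrite !(ipDl, ipNl, ipZl, ipDr, ipNr, ipZr, conjc_real).
rewrite (ip_selfE u) (ip_selfE v) -!hnorm_sqr -/a -/b (ipC v u).
case: (ip u v) => r1 r2; simpc; rewrite /= => expansion_ge0.
have ab_gt0 : 0 < a * b by rewrite mulr_gt0.
nra.
Qed.

Lemma hnormD u v : hnorm ip (u + v) <= hnorm ip u + hnorm ip v.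
Proof.
have CS := Re_ip_le_hnormM u v.
have a0 := hnorm_ge0 u; have b0 := hnorm_ge0 v.
rewrite -(ler_sqr (x := hnorm ip (u + v))) ?nnegrE ?addr_ge0 ?hnorm_ge0 //.
rewrite hnorm_sqr !(ipDl, ipDr) (ip_selfE u) (ip_selfE v) -!hnorm_sqr (ipC v u).
move: CS; set a := hnorm ip u; set b := hnorm ip v.
by case: (ip u v) => r1 r2; simpc; rewrite /= => CS; nra.
Qed.

Lemma hnorm_le_hnorm2 (xi : 'I_2 -> V) (i : 'I_2) : hnorm ip (xi i) <= hnorm2 ip xi.
Proof.
have : 0 <= \sum_(k < 2 | k != i) ip (xi k) (xi k).
  by apply: sumr_ge0 => k _; exact: ip_ge0.
rewrite lecE => /andP[_ rest_ge0].
rewrite /hnorm2 /ip2 (bigD1 i) //= ler_sqrt raddfD /= ?lerDl //.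
by rewrite addr_ge0 ?Re_ip_ge0.
Qed.

Lemma hnorm2_single (v : V) (j : 'I_2) :
  hnorm2 ip (fun k => if k == j then v else 0) = hnorm ip v.
Proof.
rewrite /hnorm2 /ip2 (bigD1 j) //= eqxx big1 ?addr0 // => k /negbTE ->.
exact: ip0l.
Qed.

End InnerProduct.

Section LinearMap.
Variables (R : realType) (V : lmodType R[i]) (A : V -> V).
Hypothesis A_lin : forall (a : R[i]) u w, A (a *: u + w) = a *: A u + A w.

Lemma linop0 : A 0 = 0.
Proof.
have h := A_lin 1 0 0; rewrite scale1r addr0 scale1r in h.
by apply: (@addrI _ (A 0)); rewrite -h addr0.
Qed.

Lemma linopD u w : A (u + w) = A u + A w.
Proof. by have := A_lin 1 u w; rewrite !scale1r. Qed.

Lemma linopZ a u : A (a *: u) = a *: A u.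
Proof. by have := A_lin a u 0; rewrite !addr0 linop0 addr0. Qed.

Lemma linopN u : A (- u) = - A u.
Proof. by rewrite -scaleN1r linopZ scaleN1r. Qed.

End LinearMap.

Section OperatorNorm.
Variables (R : realType) (V : lmodType R[i]) (ip : V -> V -> R[i]).
Hypothesis Hip : is_inner_product ip.

Definition opbound (w : V -> V) (c : R) : Prop :=
  0 <= c /\ forall v, hnorm ip (w v) <= c * hnorm ip v.

Lemma opnorm_le w c : opbound w c -> opnorm ip w <= c.
Proof. by apply: ge_inf; exists 0 => d []. Qed.

Lemma opbound_opnorm w : (exists c, opbound w c) -> opbound w (opnorm ip w).
Proof.
move=> [c wc]; split; first by apply: lb_le_inf; [exists c | move=> d []].
move=> v; rewrite leNgt; apply/negP => opnorm_lt.
have [v0|v_neq0] := eqVneq (hnorm ip v) 0.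
  by move: opnorm_lt (wc.2 v); rewrite v0 !mulr0 => /lt_geF ->.
have v_gt0 : 0 < hnorm ip v by rewrite lt0r v_neq0 hnorm_ge0.
have : opnorm ip w < hnorm ip (w v) / hnorm ip v by rewrite ltr_pdivlMr.
case/(inf_lt (ex_intro _ c wc)) => d [_ wd]; rewrite ltr_pdivlMr //.
by rewrite ltNge wd.
Qed.

Lemma opnormZ (c : R) w : 0 < c -> (exists b, opbound w b) ->
  opnorm ip (fun v => c%:C%C *: w v) = c * opnorm ip w.
Proof.
move=> c_gt0 /opbound_opnorm [opnorm_ge0 w_opnorm].
have hnorm_cw v : hnorm ip (c%:C%C *: w v) = c * hnorm ip (w v).
  by rewrite (hnormZ_real Hip) // ltW.
have cw_bound : opbound (fun v => c%:C%C *: w v) (c * opnorm ip w).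
  apply: conj => [|v]; first exact: mulr_ge0 (ltW c_gt0) opnorm_ge0.
  by rewrite hnorm_cw -mulrA ler_pM2l.
apply/le_anti; rewrite opnorm_le //= -ler_pdivlMl //.
have [cw_ge0 cw_opnorm] := opbound_opnorm (ex_intro _ _ cw_bound).
apply: opnorm_le; apply: conj => [|v].
  by rewrite mulr_ge0 // invr_ge0 ltW.
by rewrite -mulrA ler_pdivlMl // -hnorm_cw.
Qed.

Lemma opbound_entry_XM (M : set (V -> V)) (x : mat2 V) (i j : 'I_2) :
  (forall y, M y -> y 0 = 0) -> XM ip M x -> opbound (x i j) 1.
Proof.
move=> M0 [xM _ x_contr]; split=> // v; rewrite mul1r.
pose xi k := if k == j then v else 0.
have -> : x i j v = act2 x xi i.
  rewrite /act2 (bigD1 j) //= /xi eqxx big1 ?addr0 // => k /negbTE ->.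
  exact: M0.
by rewrite -(hnorm2_single Hip v j) (le_trans (hnorm_le_hnorm2 Hip _ i)).
Qed.

Lemma hnorm_le_sup_unit_sphere (M : set (V -> V)) (f : (V -> V) -> V) w :
  (forall (a : R[i]) x, M x -> M (fun v => a *: x v)) ->
  (forall (a : R[i]) x, f (fun v => a *: x v) = a *: f x) ->
  M w -> opbound w 1 ->
  ((hnorm ip (f w))%:E <= ereal_sup (0%E |`
     [set (hnorm ip (f x))%:E | x in [set x | M x /\ opnorm ip x = 1%R]]))%E.
Proof.
move=> M_scale fZ Mw w_contr.
have [c_ge0 w_opnorm] := opbound_opnorm (ex_intro _ _ w_contr).
set c := opnorm ip w in c_ge0 w_opnorm.
have c_le1 : c <= 1 by apply: opnorm_le.
have [c0|c_neq0] := eqVneq c 0.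
  have w0 : w = fun v => 0 *: w v.
    apply: funext => v; rewrite scale0r; apply: (hnorm_eq0 Hip).
    by apply/le_anti; rewrite hnorm_ge0 andbT (le_trans (w_opnorm v)) // c0 mul0r.
  by rewrite w0 fZ scale0r (hnorm0 Hip); apply: ereal_sup_ubound; left.
have c_gt0 : 0 < c by rewrite lt0r c_neq0.
(* normalising w to norm one divides ||f w|| by c <= 1 *)
pose z := fun v => c^-1%:C%C *: w v.
have z_unit : opnorm ip z = 1.
  by rewrite opnormZ ?invr_gt0 ?mulVf //; exists 1.
apply: (@le_trans _ _ (hnorm ip (f z))%:E); last first.
  by apply: ereal_sup_ubound; right; exists z => //; split=> //; apply: M_scale.
rewrite lee_fin fZ (hnormZ_real Hip) ?invr_ge0 // ler_pdivlMl //.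
by rewrite ler_piMl // hnorm_ge0.
Qed.

End OperatorNorm.

Section HausdorffBound.
Variables (R : realType) (V : lmodType R[i]) (ip : V -> V -> R[i]).

Lemma Lmat_le (L : (V -> V) * (V -> V) -> R) (a b : mat2 V) (K : \bar R) :
  (0 <= K)%E -> (forall i j, ((L (a i j, b i j))%:E <= K)%E) ->
  ((Lmat L a b)%:E <= K)%E.
Proof.
have max_le r s : (r%:E <= K)%E -> (s%:E <= K)%E -> ((Num.max r s)%:E <= K)%E.
  by rewrite /Num.max; case: ifP.
move=> K_ge0 L_le; apply: (big_ind (fun r => (r%:E <= K)%E)) => // i _.
by apply: (big_ind (fun r => (r%:E <= K)%E)).
Qed.

Lemma distH_le_diag (M : set (V -> V)) (L : (V -> V) * (V -> V) -> R) (K : \bar R) :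
  (forall x, XM ip M x -> ((Lmat L x (negm x))%:E <= K)%E) ->
  (distH ip M L <= K)%E.
Proof.
move=> diag_le; rewrite /distH ge_max; apply/andP; split;
  apply: ge_ereal_sup => _ [x Xx <-];
  by apply: le_trans (diag_le x Xx); apply: ereal_inf_lbound; exists x.
Qed.

End HausdorffBound.

Lemma Lset_hnorm_add (R : realType) (V : lmodType R[i]) (ip : V -> V -> R[i])
    (M : set (V -> V)) (Om : V) (T S : V -> V) :
  is_inner_product ip ->
  (forall (a : R[i]) u w, T (a *: u + w) = a *: T u + T w) ->
  (forall (a : R[i]) u w, S (a *: u + w) = a *: S u + S w) ->
  Lset M (fun x => hnorm ip (T (x Om))) (fun y => hnorm ip (S (y Om)))
    (fun p => hnorm ip (T (p.1 Om) + S (p.2 Om))).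
Proof.
move=> Hip T_lin S_lin; split.
- move=> x y x' y' _ _ _ _ /=.
  by rewrite (linopD T_lin) (linopD S_lin) addrACA hnormD.
- by move=> c x y _ _ /=; rewrite (linopZ T_lin) (linopZ S_lin) -scalerDr hnormZ.
- by move=> x _ /=; rewrite (linop0 S_lin) addr0.
- by move=> y _ /=; rewrite (linop0 T_lin) add0r.
Qed.

Theorem mainTheorem13 (R : realType) (V : lmodType R[i]) (ip : V -> V -> R[i])
  (Hip : is_inner_product ip) (Hcomp : hcomplete ip) (Hsep : hseparable ip)
  (M : set (V -> V)) (HM : vN_algebra ip M)
  (Om : V) (HOm : separating M Om)
  (T S : V -> V) (HT : bounded_op ip T) (HS : bounded_op ip S)
  (HTinj : injective T) (HSinj : injective S)
  (HTc : compact_map ip M (fun x => T (x Om)))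
  (HSc : compact_map ip M (fun x => S (x Om))) :
  let L1 := fun x : V -> V => hnorm ip (T (x Om)) in
  let L2 := fun x : V -> V => hnorm ip (S (x Om)) in
  let J := fun p : (V -> V) * (V -> V) => hnorm ip (T (p.1 Om) + S (p.2 Om)) in
  Lset M L1 L2 J /\
  (dist_qGH ip M L1 L2 <=
     ereal_sup (0%E |` [set (hnorm ip (T (x Om) - S (x Om)))%:E
                       | x in [set x | M x /\ opnorm ip x = 1%R]]))%E.
Proof.
move=> L1 L2 J.
have [T_lin _] := HT; have [S_lin _] := HS.
have [[M_bounded _ _ M_scale _] _] := HM.
have M0 y : M y -> y 0 = 0 by move/M_bounded => [/linop0].
have LJ : Lset M L1 L2 J by exact: Lset_hnorm_add.
split=> //; apply: le_trans (ereal_inf_lbound (ex_intro2 _ _ J LJ erefl)) _.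
apply: distH_le_diag => x Xx; apply: Lmat_le => [|i j].
  by apply: ereal_sup_ubound; left.
rewrite /J /negm /= (linopN S_lin).
apply: (hnorm_le_sup_unit_sphere Hip (f := fun x => T (x Om) - S (x Om))) => //.
- by move=> a y /=; rewrite (linopZ T_lin) (linopZ S_lin) scalerBr.
- by case: Xx.
- exact: opbound_entry_XM Xx.
Qed.
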